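(* Let $\mathcal{O}_K$ be a Henselian discrete valuation domain with field of fractions $K$ and algebraically closed residue field of characteristic $2$, with normalized valuation $v$. Let $u$ be an integer with $0<u<v(2)$. Then there exists an elliptic curve $E/K$ with good supersingular reduction such that $v(j(E))=12u$.
   Context: $v(0)=\infty$, so $v(2)=\infty$ when $\operatorname{char}K=2$. *)

From HB Require Import structures.
From mathcomp Require Import all_boot all_order all_algebra.
Set Implicit Arguments. Unset Strict Implicit. Unset Printing Implicit Defensive.
Import Order.TTheory GRing.Theory Num.Theory.
Local Open Scope ring_scope.

(* A normalized discrete valuation on K, recorded on nonzero elements only;
   by convention v(0) = +oo (so v is never consulted at 0). *)
Definition is_normalized_dval (K : fieldType) (v : K -> int) : Prop :=
  [/\ forall x y : K, x != 0 -> y != 0 -> v (x * y) = v x + v y,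
      forall x y : K, x != 0 -> y != 0 -> x + y != 0 ->
        Order.min (v x) (v y) <= v (x + y)
    & exists pi : K, pi != 0 /\ v pi = 1].

Definition in_O (K : fieldType) (v : K -> int) (x : K) : Prop := x = 0 \/ 0 <= v x.
Definition in_m (K : fieldType) (v : K -> int) (x : K) : Prop := x = 0 \/ 0 < v x.

(* red : K -> k realizes k as the residue field O_K / m_K :
   restricted to O_K it is a surjective ring morphism with kernel m_K. *)
Definition is_residue_map (K : fieldType) (k : fieldType) (v : K -> int)
    (red : K -> k) : Prop :=
  [/\ forall x y, in_O v x -> in_O v y -> red (x + y) = red x + red y,
      forall x y, in_O v x -> in_O v y -> red (x * y) = red x * red y,
      red 1 = 1,
      forall z : k, exists2 x, in_O v x & red x = z
    & forall x, in_O v x -> (red x = 0 <-> in_m v x)].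

Definition henselian (K : fieldType) (v : K -> int) : Prop :=
  forall (p : {poly K}) (a0 : K),
    (forall i, in_O v p`_i) -> in_O v a0 ->
    in_m v p.[a0] -> ~ in_m v (p^`()).[a0] ->
    exists a : K, [/\ in_O v a, p.[a] = 0 & in_m v (a - a0)].

Record wcurve (R : Type) := WCurve { wa1 : R; wa2 : R; wa3 : R; wa4 : R; wa6 : R }.

Section Weierstrass.
Variable R : comNzRingType.
Variable E : wcurve R.
Local Notation a1 := (wa1 E). Local Notation a2 := (wa2 E).
Local Notation a3 := (wa3 E). Local Notation a4 := (wa4 E).
Local Notation a6 := (wa6 E).

Definition wb2 : R := a1 ^+ 2 + 4 * a2.
Definition wb4 : R := 2 * a4 + a1 * a3.
Definition wb6 : R := a3 ^+ 2 + 4 * a6.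
Definition wb8 : R := a1 ^+ 2 * a6 + 4 * a2 * a6 - a1 * a3 * a4
                      + a2 * a3 ^+ 2 - a4 ^+ 2.
Definition wc4 : R := wb2 ^+ 2 - 24 * wb4.
Definition disc : R :=
  - wb2 ^+ 2 * wb8 - 8 * wb4 ^+ 3 - 27 * wb6 ^+ 2 + 9 * wb2 * wb4 * wb6.

Definition on_curve (x y : R) : Prop :=
  y ^+ 2 + a1 * x * y + a3 * y = x ^+ 3 + a2 * x ^+ 2 + a4 * x + a6.

(* E[2] = {O}: no affine point P satisfies P = -P,
   where -(x,y) = (x, -y - a1 x - a3). *)
Definition two_torsion_trivial : Prop :=
  forall x y : R, on_curve x y -> y <> - y - a1 * x - a3.
End Weierstrass.

Definition jinv (K : fieldType) (E : wcurve K) : K := wc4 E ^+ 3 / disc E.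

(* The Weierstrass model obtained by x = u^2 x' + r, y = u^3 y' + s u^2 x' + t
   (Silverman, Table 3.1). *)
Definition wchange (K : fieldType) (E : wcurve K) (u r s t : K) : wcurve K :=
  let a1 := wa1 E in let a2 := wa2 E in let a3 := wa3 E in
  let a4 := wa4 E in let a6 := wa6 E in
  WCurve ((a1 + 2 * s) / u)
         ((a2 - s * a1 + 3 * r - s ^+ 2) / u ^+ 2)
         ((a3 + r * a1 + 2 * t) / u ^+ 3)
         ((a4 - s * a3 + 2 * r * a2 - (t + r * s) * a1 + 3 * r ^+ 2
             - 2 * s * t) / u ^+ 4)
         ((a6 + r * a4 + r ^+ 2 * a2 + r ^+ 3 - t * a3 - t ^+ 2
             - r * t * a1) / u ^+ 6).

Definition wmap (A B : Type) (f : A -> B) (E : wcurve A) : wcurve B :=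
  WCurve (f (wa1 E)) (f (wa2 E)) (f (wa3 E)) (f (wa4 E)) (f (wa6 E)).

Definition wintegral (K : fieldType) (v : K -> int) (E : wcurve K) : Prop :=
  [/\ in_O v (wa1 E), in_O v (wa2 E), in_O v (wa3 E), in_O v (wa4 E)
    & in_O v (wa6 E)].

(* E/K has good supersingular reduction (residue characteristic 2, residue
   field algebraically closed): some K-isomorphic Weierstrass model is
   integral with unit discriminant, and its reduction E~ over k satisfies
   E~[2] = 0, i.e. E~ is supersingular. *)
Definition good_supersingular_reduction (K : fieldType) (k : fieldType)
    (v : K -> int) (red : K -> k) (E : wcurve K) : Prop :=
  exists u r s t : K,
    [/\ u != 0,
        wintegral v (wchange E u r s t),
        disc (wchange E u r s t) != 0 /\ v (disc (wchange E u r s t)) = 0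
      & two_torsion_trivial (wmap red (wchange E u r s t))].

(* Take [a] with [v a = u] and the curve [y^2 + a x y + y = x^3].  Its
   discriminant [a^3 - 27] is a unit, since [27] is odd and [v a > 0]; its
   invariant [c4 = a (a^3 - 24)] has valuation [4u], because
   [v (a^3) = 3u < 3 v(2) = v 24].  Hence [v j = 3 v c4 - v disc = 12u].  The
   reduction [y^2 + y = x^3] has [a1 = 0] and [a3 = 1], which in
   characteristic 2 leaves no point of order 2.  The construction is explicit. *)

From HB Require Import structures.
From mathcomp Require Import all_boot all_order all_algebra.
From mathcomp Require Import ring zify.
Import Order.TTheory GRing.Theory Num.Theory.
Local Open Scope ring_scope.
Set Implicit Arguments. Unset Strict Implicit.

Section DiscreteValuation.
Variables (K : fieldType) (v : K -> int).
Hypothesis hv : is_normalized_dval v.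

Lemma dvalM x y : x != 0 -> y != 0 -> v (x * y) = v x + v y.
Proof. by case: hv => vM _ _; apply: vM. Qed.

Lemma dval_ge_min x y :
  x != 0 -> y != 0 -> x + y != 0 -> Order.min (v x) (v y) <= v (x + y).
Proof. by case: hv => _ vD _; apply: vD. Qed.

Lemma dval1 : v 1 = 0.
Proof.
by have := @dvalM 1 1 (oner_neq0 _) (oner_neq0 _); rewrite mulr1 => h; lia.
Qed.

Lemma dvalV x : x != 0 -> v x^-1 = - v x.
Proof.
by move=> x0; have := dvalM x0 (invr_neq0 x0); rewrite divff // dval1 => h; lia.
Qed.

Lemma dvalN x : x != 0 -> v (- x) = v x.
Proof.
move=> x0; have N1 : (-1 : K) != 0 by rewrite oppr_eq0 oner_neq0.
have vN1 : v (-1) = 0.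
  by have := dvalM N1 N1; rewrite mulrNN mulr1 dval1 => h; lia.
by rewrite -mulN1r dvalM // vN1 add0r.
Qed.

Lemma dvalX x n : x != 0 -> v (x ^+ n) = n%:Z * v x.
Proof.
move=> x0; elim: n => [|n IHn]; first by rewrite expr0 dval1 mul0r.
by rewrite exprS dvalM ?expf_neq0 // IHn; lia.
Qed.

Lemma dvalD_ltl x y :
  x != 0 -> y != 0 -> v x < v y -> x + y != 0 /\ v (x + y) = v x.
Proof.
move=> x0 y0 lt_xy.
have xy0 : x + y != 0.
  apply: contraTneq lt_xy => /eqP; rewrite addr_eq0 => /eqP->.
  by rewrite dvalN // ltxx.
split=> //; apply/eqP; rewrite eq_le.
have := dval_ge_min x0 y0 xy0; rewrite (min_l (ltW lt_xy)) => ->.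
have Ny0 : - y != 0 by rewrite oppr_eq0.
have := dval_ge_min xy0 Ny0; rewrite addrK dvalN // => /(_ x0).
by rewrite ge_min (leNgt (v y)) lt_xy orbF andbT.
Qed.

End DiscreteValuation.

Section ResidueCharacteristicTwo.
Variables (K : fieldType) (v : K -> int) (k : fieldType) (red : K -> k).
Hypotheses (hv : is_normalized_dval v) (hred : is_residue_map v red).
Hypothesis k_char2 : (2%:R : k) = 0.

Lemma in_O_nat n : in_O v (n%:R : K).
Proof.
elim: n => [|n IHn]; first by left.
rewrite mulrS; have [->|n0] := eqVneq (n%:R : K) 0.
  by right; rewrite addr0 (dval1 hv).
have [|Sn0] := eqVneq (1 + n%:R : K) 0; first by left.
right; case: IHn => [/eqP|vn]; first by rewrite (negbTE n0).
apply: le_trans (dval_ge_min hv (oner_neq0 _) n0 Sn0).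
by rewrite le_min (dval1 hv) lexx.
Qed.

Lemma red_nat n : red n%:R = n%:R.
Proof.
case: hred => redD _ red1 _ _.
have red0 : red 0 = 0.
  by apply/(addrI (red 0)); rewrite -redD ?addr0 //; left.
elim: n => [|n IHn] //.
by rewrite !mulrS redD ?IHn ?red1 //; [right; rewrite dval1 | apply: in_O_nat].
Qed.

Lemma red_m x : in_m v x -> red x = 0.
Proof.
case: hred => _ _ _ _ redK mx; apply/(redK x) => //.
by case: mx => [->|/ltW]; [left | right].
Qed.

Lemma dval_red_neq0 x : in_O v x -> red x != 0 -> x != 0 /\ v x = 0.
Proof.
case: hred => _ _ _ _ redK Ox rx0.
have not_mx : ~ in_m v x by move/(redK x Ox)/eqP; rewrite (negbTE rx0).
have x0 : x != 0 by apply: contra_notN not_mx => /eqP->; left.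
split=> //; case: Ox => [x0'|ge0]; first by rewrite x0' eqxx in x0.
apply/eqP; rewrite eq_le ge0 andbT leNgt.
by apply/negP => ?; apply: not_mx; right.
Qed.

Lemma dval_odd_nat n : odd n -> (n%:R : K) != 0 /\ v n%:R = 0.
Proof.
move=> odd_n; apply: dval_red_neq0; first exact: in_O_nat.
rewrite red_nat -(odd_double_half n) odd_n natrD -mul2n natrM k_char2.
by rewrite mul0r addr0 oner_neq0.
Qed.

End ResidueCharacteristicTwo.

Lemma two_torsion_trivial_pchar2 (R : comNzRingType) (E : wcurve R) :
  (2 : R) = 0 -> wa1 E = 0 -> wa3 E != 0 -> two_torsion_trivial E.
Proof.
move=> R_char2 a1E a3E x y _; rewrite a1E mul0r subr0 => /eqP.
rewrite -subr_eq0 opprB opprK addrCA -mulr2n -mulr_natl R_char2.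
by rewrite mul0r addr0 (negbTE a3E).
Qed.

Lemma wchange_id (K : fieldType) (E : wcurve K) : wchange E 1 0 0 0 = E.
Proof.
case: E => a1 a2 a3 a4 a6; rewrite /wchange /= !expr1n !divr1.
by congr WCurve; ring.
Qed.

Definition ss_curve (R : comNzRingType) (a : R) : wcurve R := WCurve a 0 1 0 0.

Section SupersingularCurve.
Variable R : comNzRingType.
Variable a : R.

Lemma disc_ss_curve : disc (ss_curve a) = a ^+ 3 - 27%:R.
Proof. by rewrite /disc /wb2 /wb4 /wb6 /wb8 /=; ring. Qed.

Lemma wc4_ss_curve : wc4 (ss_curve a) = a * (a ^+ 3 - 24%:R).
Proof. by rewrite /wc4 /wb2 /wb4 /=; ring. Qed.

End SupersingularCurve.

Section SupersingularCurveValuation.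
Variables (K : fieldType) (v : K -> int) (k : fieldType) (red : K -> k).
Hypotheses (hv : is_normalized_dval v) (hred : is_residue_map v red).
Hypothesis k_char2 : (2%:R : k) = 0.
Variable a : K.
Hypotheses (a0 : a != 0) (va_gt0 : 0 < v a).

Let va3 : v (a ^+ 3) = 3 * v a.
Proof. by rewrite (dvalX hv). Qed.

Let a3_0 : a ^+ 3 != 0.
Proof. by rewrite expf_neq0. Qed.

Lemma dval_disc_ss_curve :
  disc (ss_curve a) != 0 /\ v (disc (ss_curve a)) = 0.
Proof.
have [n27 v27] := dval_odd_nat hv hred k_char2 (n := 27) isT.
have N27 : - 27%:R != 0 :> K by rewrite oppr_eq0.
have lt27 : v (- 27%:R) < v (a ^+ 3) by rewrite dvalN // v27 va3 mulr_gt0.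
have [nz vs] := dvalD_ltl hv N27 a3_0 lt27.
rewrite disc_ss_curve addrC; split; first exact: nz.
by apply: etrans vs _; rewrite dvalN.
Qed.

Lemma dval_wc4_ss_curve :
  (2 : K) = 0 \/ v a < v 2 ->
  wc4 (ss_curve a) != 0 /\ v (wc4 (ss_curve a)) = 4 * v a.
Proof.
move=> a_small; rewrite wc4_ss_curve.
suff [b0 vb] : a ^+ 3 - 24%:R != 0 /\ v (a ^+ 3 - 24%:R) = 3 * v a.
  by rewrite mulf_neq0 // dvalM // vb; split=> //; lia.
have e24 : (24%:R : K) = 2 * 2 * 2 * 3%:R by rewrite -!natrM.
have [K_char2|K2] := eqVneq (2 : K) 0.
  by rewrite e24 K_char2 !mul0r subr0.
have [n3 v3] := dval_odd_nat hv hred k_char2 (n := 3) isT.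
have n24 : (24%:R : K) != 0 by rewrite e24 !mulf_neq0.
have N24 : - 24%:R != 0 :> K by rewrite oppr_eq0.
have v24 : v (- 24%:R) = 3 * v 2.
  by rewrite dvalN // e24 !dvalM ?mulf_neq0 // v3; lia.
have lt24 : v (a ^+ 3) < v (- 24%:R).
  by rewrite va3 v24; case: a_small => [/eqP|]; [rewrite (negbTE K2) | lia].
by have [nz ->] := dvalD_ltl hv a3_0 N24 lt24; rewrite va3.
Qed.

Lemma dval_jinv_ss_curve :
  (2 : K) = 0 \/ v a < v 2 ->
  jinv (ss_curve a) != 0 /\ v (jinv (ss_curve a)) = 12 * v a.
Proof.
move=> /dval_wc4_ss_curve [c0 vc]; have [d0 vd] := dval_disc_ss_curve.
rewrite /jinv mulf_neq0 ?invr_eq0 ?expf_neq0 //.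
rewrite dvalM ?invr_eq0 ?expf_neq0 // dvalV // vd (dvalX hv) // vc.
by split=> //; lia.
Qed.

Lemma ss_curve_good_supersingular :
  good_supersingular_reduction v red (ss_curve a).
Proof.
have [red1 ra] : red 1 = 1 /\ red a = 0.
  by split; [case: hred | apply: (red_m hred); right].
exists 1, 0, 0, 0; rewrite wchange_id; split.
- exact: oner_neq0.
- by split; [right; apply: ltW | left | right; rewrite dval1 | left | left].
- exact: dval_disc_ss_curve.
- by apply: two_torsion_trivial_pchar2 => //=; rewrite ?ra ?red1 ?oner_neq0.
Qed.

End SupersingularCurveValuation.

Theorem lemma2p12 (K : fieldType) (v : K -> int) (k : closedFieldType)
    (red : K -> k) (u : int) :
  is_normalized_dval v -> is_residue_map v red -> henselian v ->
  (2%N \in [pchar k]) ->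
  0 < u -> ((2 : K) = 0 \/ u < v 2) ->
  exists E : wcurve K,
    [/\ disc E != 0,
        good_supersingular_reduction v red E,
        jinv E != 0
      & v (jinv E) = 12 * u].
Proof.
move=> hv hred _ /pcharf0 k_char2 u_gt0 u_small.
have [pi pi0 vpi] : exists2 pi : K, pi != 0 & v pi = 1.
  by case: hv => _ _ [pi []]; exists pi.
have [n def_u] : exists n : nat, u = n%:Z by exists `|u|%N; lia.
have a0 : pi ^+ n != 0 by rewrite expf_neq0.
have va : v (pi ^+ n) = u by rewrite (dvalX hv) // vpi def_u; lia.
rewrite -va in u_gt0 u_small *.
have [j0 vj] := dval_jinv_ss_curve hv hred k_char2 a0 u_gt0 u_small.
exists (ss_curve (pi ^+ n)); split=> //.
- by case: (dval_disc_ss_curve hv hred k_char2 a0 u_gt0).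
- exact: ss_curve_good_supersingular.
Qed.
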